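(* For every $n\in\mathbb{N}$, every formula $\varphi$ of $\mathbf{CPN}_n$ whose propositional letters are among $p_1,\dots,p_m$, and every valuation $\mathcal V$: $\;p_1^{\mathcal V},\dots,p_m^{\mathcal V}\vdash_{(n)}\varphi^{\mathcal V}$.
   Context: Fix $n\in\mathbb{N}$, $n\ge 1$, and write $[n]=\{1,\dots,n\}$. Chains: a chain over $[n]$ is a finite sequence of distinct elements of $[n]$; chains with the same length and the same symbols are identified, so a chain is effectively a subset of $[n]$. $c_k$ denotes a chain with $k$ symbols, $\epsilon$ the empty chain, and $(n)$ the chain consisting of all symbols of $[n]$. For chains $c,d$: the concatenation $c\cdot d$ is the chain of symbols occurring in $c$ or in $d$; the coconcatenation $c\otimes d$ is the chain of symbols occurring in exactly one of $c,d$; $d$ is a subchain of $c$ if every symbol of $d$ is a symbol of $c$. The complementary chain $c'_{n-k}$ of $c_k$ is the chain of the symbols of $[n]$ not occurring in $c_k$. Language of $\mathbf{CPN}_n$: a countable set $P_n$ of propositional letters; constants $\perp_c$ for each chain $c$ over $[n]$ with $1\le |c|\le n-1$, and constants $\perp_{(n)}$ (contradiction) and $\top_{(n)}$ (truth); a unary connective $\neg_c$ for each nonempty chain $c$ over $[n]$ ($\neg_{(n)}$ is the strong negation; the $\neg_c$ with $|c|\le n-1$ are weak negations); a binary connective $\to_{(n)}$. Formulas: propositional letters and constants are formulas; if $\varphi,\psi$ are formulas then so are $\neg_c\varphi$ and $(\varphi\to_{(n)}\psi)$. Conventions: $\neg_\epsilon\varphi:=\varphi$, $\perp_\epsilon:=\top_{(n)}$,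 and $\perp_c$ for $c=(n)$ means $\perp_{(n)}$. Abbreviations: $\varphi\wedge_{(n)}\psi:=\neg_{(n)}(\varphi\to_{(n)}\neg_{(n)}\psi)$, $\varphi\vee_{(n)}\psi:=\neg_{(n)}\varphi\to_{(n)}\psi$, $\varphi\leftrightarrow_{(n)}\psi:=(\varphi\to_{(n)}\psi)\wedge_{(n)}(\psi\to_{(n)}\varphi)$. Axioms of $\mathbf{CPN}_n$, for all formulas $\varphi,\psi,\chi$ and all nonempty chains $c_k,c_r$ over $[n]$: (A1) $\varphi\to_{(n)}(\psi\to_{(n)}\varphi)$; (A2) $(\varphi\to_{(n)}(\psi\to_{(n)}\chi))\to_{(n)}((\varphi\to_{(n)}\psi)\to_{(n)}(\varphi\to_{(n)}\chi))$; (A3) $(\neg_{(n)}\psi\to_{(n)}\neg_{(n)}\varphi)\to_{(n)}((\neg_{(n)}\psi\to_{(n)}\varphi)\to_{(n)}\psi)$; (A4) $\varphi\to_{(n)}(\perp_{c_k}\to_{(n)}\neg_{c_k}\varphi)$; (A5) $\neg_{c_k}\neg_{c_r}\varphi\leftrightarrow_{(n)}\neg_{c_k\otimes c_r}\varphi$; (A6) $\neg_{c_k}\perp_{c_r}\leftrightarrow_{(n)}\perp_{c_k\otimes c_r}$; (A7) $\perp_{c_k}\to_{(n)}\perp_{c_r}$, whenever $c_r$ is a subchain of $c_k$. The only rule of inference is modus ponens (from $\varphi$ and $\varphi\to_{(n)}\psi$ infer $\psi$). For a set $\Sigma$ of formulas, $\Sigma\vdash_{(n)}\varphi$ means there is a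 finite sequence of formulas ending with $\varphi$, each of which is an axiom, a member of $\Sigma$, or obtained from two earlier members by modus ponens; $\vdash_{(n)}\varphi$ means $\emptyset\vdash_{(n)}\varphi$. Semantics: for each $i\in[n]$ there is a world $\mathcal M_i=\{T_i,F_i\}$ (pairwise disjoint sets). A valuation $\mathcal V$ assigns to each propositional letter $p$ and each $i\in[n]$ a value $v_i(p)\in\mathcal M_i$ (independently for different $i$). It extends to all formulas, for each $i$, by: $\bar v_i(p)=v_i(p)$ for letters; $\bar v_i(\perp_c)=F_i$ if $i$ is a symbol of $c$ and $T_i$ otherwise (so $\bar v_i(\perp_{(n)})=F_i$ and $\bar v_i(\top_{(n)})=T_i$); $\bar v_i(\neg_c\varphi)=\bar v_i(\varphi)$ if $i$ is not a symbol of $c$, and the opposite value ($T_i\leftrightarrow F_i$) if $i$ is a symbol of $c$; $\bar v_i(\varphi\to_{(n)}\psi)=F_i$ iff $\bar v_i(\varphi)=T_i$ and $\bar v_i(\psi)=F_i$, otherwise $T_i$ (hence $\wedge_{(n)},\vee_{(n)}$ behave classically in each world). Write $\bar{\mathcal V}(\varphi)=(\bar v_1(\varphi),\dots,\bar v_n(\varphi))$. A formula $\varphi$ is a tautology, written $\models_{(n)}\varphi$, iff $\bar{\mathcal V}(\varphi)=(T_1,\dots,T_n)$ for every valuation $\mathcal V$. Given a valuation $\mathcal V$ and a chain $c$ over $[n]$ (possibly empty), a formula $\varphi$ is $c$-contingent (under $\mathcal V$) if $\bar v_i(\varphi)=F_i$ for every symbol $i$ of $c$ and $\bar v_i(\varphi)=T_i$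 for every $i\in[n]$ not in $c$. Every formula is $c$-contingent for exactly one chain $c$, and one sets $\varphi^{\mathcal V}:=\neg_c\varphi$ for that $c$ (so $\varphi^{\mathcal V}=\varphi$ when $\bar{\mathcal V}(\varphi)=(T_1,\dots,T_n)$). *)

From mathcomp Require Import all_boot.
Set Implicit Arguments. Unset Strict Implicit. Unset Printing Implicit Defensive.

(* Chains over [n] are subsets of 'I_n (symbol i+1 of [n] is the ordinal i). *)
Definition chain (n : nat) := {set 'I_n}.

Definition cocat n (c d : chain n) : chain n := (c :\: d) :|: (d :\: c).

(* Propositional letters are indexed by nat.
   [Bot c] is the constant perp_c; by the paper's conventions
   [Bot set0] is top_(n) and [Bot setT] is perp_(n).
   [Neg c _ f] is neg_c f, only for nonempty chains c. *)
Inductive formula (n : nat) : Type :=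
| Var of nat
| Bot of chain n
| Neg (c : chain n) (hc : c != set0) (f : formula n)
| Imp of formula n & formula n.

Arguments Var {n}.

(* neg_c with the convention neg_eps f := f *)
Definition neg n (c : chain n) (f : formula n) : formula n :=
  (if c != set0 as b return (c != set0) = b -> formula n
   then fun h => Neg h f else fun _ => f) erefl.

Definition snot n (f : formula n) := neg setT f.
Definition conj n (f g : formula n) := snot (Imp f (snot g)).
Definition disj n (f g : formula n) := Imp (snot f) g.
Definition iff n (f g : formula n) := conj (Imp f g) (Imp g f).

Fixpoint letters n (f : formula n) : seq nat :=
  match f with
  | Var p => [:: p]
  | Bot _ => [::]
  | Neg _ _ g => letters g
  | Imp g h => letters g ++ letters h
  end.

Inductive axiom (n : nat) : formula n -> Prop :=
| A1 (f g : formula n) : axiom (Imp f (Imp g f))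
| A2 (f g h : formula n) :
    axiom (Imp (Imp f (Imp g h)) (Imp (Imp f g) (Imp f h)))
| A3 (f g : formula n) :
    axiom (Imp (Imp (snot g) (snot f)) (Imp (Imp (snot g) f) g))
| A4 (f : formula n) (c : chain n) : c != set0 ->
    axiom (Imp f (Imp (Bot c) (neg c f)))
| A5 (f : formula n) (c r : chain n) : c != set0 -> r != set0 ->
    axiom (iff (neg c (neg r f)) (neg (cocat c r) f))
| A6 (c r : chain n) : c != set0 -> r != set0 ->
    axiom (iff (neg c (Bot r)) (Bot (cocat c r)))
| A7 (c r : chain n) : c != set0 -> r != set0 -> r \subset c ->
    axiom (Imp (Bot c) (Bot r)).

(* Derivability from a set of hypotheses Sigma, modus ponens only
   (inductive closure; equivalent to existence of a finite derivation). *)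
Inductive derivable (n : nat) (Sigma : formula n -> Prop) : formula n -> Prop :=
| d_hyp f : Sigma f -> derivable Sigma f
| d_ax f : axiom f -> derivable Sigma f
| d_mp f g : derivable Sigma f -> derivable Sigma (Imp f g) -> derivable Sigma g.

(* Semantics: world i has values T_i = true, F_i = false. *)
Definition valuation (n : nat) := nat -> 'I_n -> bool.

Fixpoint eval n (v : valuation n) (f : formula n) (i : 'I_n) : bool :=
  match f with
  | Var p => v p i
  | Bot c => i \notin c
  | Neg c _ g => if i \in c then ~~ eval v g i else eval v g i
  | Imp g h => eval v g i ==> eval v h i
  end.

(* The unique chain c such that f is c-contingent under v *)
Definition contingency n (v : valuation n) (f : formula n) : chain n :=
  [set i | ~~ eval v f i].

(* f^V := neg_c f, where f is c-contingent under v *)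
Definition vform n (v : valuation n) (f : formula n) : formula n :=
  neg (contingency v f) f.

From mathcomp Require Import all_boot.
Set Implicit Arguments. Unset Strict Implicit. Unset Printing Implicit Defensive.

(* The contingency chain of neg_c psi is that of psi
   coconcatenated with c, so (A5) turns the hypothesis for psi into the claim
   for neg_c psi, and (A6) does the same for the constants.  For an
   implication with contingency chain c, the formula neg_c phi is obtained by
   deriving phi from perp_c and the strong negation of phi from perp_{c'};
   both follow by classical case analysis on the constants attached to the
   two components, using that perp_x and perp_y yield perp_{x . y} and that
   the strong negation of perp_x is equivalent to perp_{x'}. *)

Section HilbertCalculus.

Variable n : nat.
Implicit Types (G D : formula n -> Prop) (f g h : formula n).

Definition extend G f : formula n -> Prop := fun x => G x \/ x = f.

Lemma derivable_mono G D f :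
  (forall x, G x -> D x) -> derivable G f -> derivable D f.
Proof.
move=> GD; elim=> [x /GD|x|x y _ IHx _ IHxy]; [exact: d_hyp|exact: d_ax|].
exact: d_mp IHx IHxy.
Qed.

Lemma derivable_extend G f g : derivable G g -> derivable (extend G f) g.
Proof. by apply: derivable_mono => x; left. Qed.

Lemma derivable_extended G f : derivable (extend G f) f.
Proof. by apply: d_hyp; right. Qed.

Lemma axK G f g : derivable G (Imp f (Imp g f)).
Proof. by apply: d_ax; constructor. Qed.

Lemma axS G f g h :
  derivable G (Imp (Imp f (Imp g h)) (Imp (Imp f g) (Imp f h))).
Proof. by apply: d_ax; constructor. Qed.

Lemma imp_refl G f : derivable G (Imp f f).
Proof. exact: d_mp (axK G f f) (d_mp (axK G f (Imp f f)) (axS G f (Imp f f) f)). Qed.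

Lemma deduction G f g : derivable (extend G f) g -> derivable G (Imp f g).
Proof.
elim=> [x [Gx|->]|x ax_x|x y _ IHx _ IHxy].
- exact: d_mp (d_hyp Gx) (axK _ _ _).
- exact: imp_refl.
- exact: d_mp (d_ax _ ax_x) (axK _ _ _).
- exact: d_mp IHx (d_mp IHxy (axS _ _ _ _)).
Qed.

Lemma by_contradiction G f g :
  derivable (extend G (snot f)) g -> derivable (extend G (snot f)) (snot g) ->
  derivable G f.
Proof. by move=> /deduction Hg /deduction Hng; apply: d_mp Hg (d_mp Hng (d_ax _ (A3 _ _))). Qed.

Lemma ex_falso G f g : derivable G f -> derivable G (snot f) -> derivable G g.
Proof. by move=> Hf Hnf; apply: (by_contradiction (g := f)); apply: derivable_extend. Qed.

Lemma snotK_elim G f : derivable G (snot (snot f)) -> derivable G f.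
Proof.
move=> Hnnf; apply: (by_contradiction (g := snot f)); first exact: derivable_extended.
exact: derivable_extend.
Qed.

Lemma derivable_cases G f g :
  derivable (extend G f) g -> derivable (extend G (snot f)) g -> derivable G g.
Proof.
move=> /deduction Hfg /deduction Hnfg.
apply: (by_contradiction (g := g)); last exact: derivable_extended.
apply: d_mp (derivable_extend _ Hnfg).
apply: (by_contradiction (g := g)); last exact: derivable_extend (derivable_extended _ _).
apply: d_mp (derivable_extend _ (derivable_extend _ Hfg)).
exact/snotK_elim/derivable_extended.
Qed.

Lemma conj_eliml G f g : derivable G (conj f g) -> derivable G f.
Proof.
move=> Hfg; apply: (by_contradiction (g := Imp f (snot g))); last exact: derivable_extend.
apply/deduction/(ex_falso (f := f)); first exact: derivable_extended.
exact/derivable_extend/derivable_extended.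
Qed.

Lemma conj_elimr G f g : derivable G (conj f g) -> derivable G g.
Proof.
move=> Hfg; apply: (by_contradiction (g := Imp f (snot g))); last exact: derivable_extend.
exact/deduction/derivable_extend/derivable_extended.
Qed.

Lemma iff_derivable G f g :
  derivable G (iff f g) -> (derivable G f <-> derivable G g).
Proof.
move=> Hfg; split=> [Hf|Hg]; first exact: d_mp Hf (conj_eliml Hfg).
exact: d_mp Hg (conj_elimr Hfg).
Qed.

Lemma snot_imp_intro G f g :
  derivable G f -> derivable G (snot g) -> derivable G (snot (Imp f g)).
Proof.
move=> Hf Hng; apply: (by_contradiction (g := g)); last exact: derivable_extend.
apply: d_mp (derivable_extend _ Hf) _.
exact/snotK_elim/derivable_extended.
Qed.

End HilbertCalculus.

Section WeakNegations.

Variable n : nat.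
Implicit Types (G : formula n -> Prop) (f : formula n) (c d : chain n).

Lemma neg_nz c (hc : c != set0) f : neg c f = Neg hc f.
Proof.
have gen b (e : (c != set0) = b) :
    (if b as b' return ((c != set0) = b' -> formula n)
     then fun h => Neg h f else fun _ => f) e = Neg hc f.
  case: b e => e; first by rewrite (eq_irrelevance e hc).
  by have := hc; rewrite e.
exact: gen.
Qed.

Lemma neg0 f : neg (set0 : chain n) f = f.
Proof.
have gen b (e : ((set0 : chain n) != set0) = b) :
    (if b as b' return (((set0 : chain n) != set0) = b' -> formula n)
     then fun h => Neg h f else fun _ => f) e = f.
  by case: b e => // e; have := e; rewrite eqxx.
exact: gen.
Qed.

Ltac chain_eq := apply/setP=> i; rewrite /cocat !inE; by do ! case: (_ \in _).

Lemma cocatxx c : cocat c c = set0. Proof. chain_eq. Qed.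
Lemma cocat0x c : cocat set0 c = c. Proof. chain_eq. Qed.
Lemma cocatx0 c : cocat c set0 = c. Proof. chain_eq. Qed.
Lemma cocatK d c : cocat (cocat c d) d = c. Proof. chain_eq. Qed.
Lemma cocatTx c : cocat setT c = ~: c. Proof. chain_eq. Qed.
Lemma cocatCx c : cocat (~: c) c = setT. Proof. chain_eq. Qed.
Lemma cocatCT c : cocat (~: c) setT = c. Proof. chain_eq. Qed.
Lemma cocat_setD c d : cocat d (c :\: d) = c :|: d. Proof. chain_eq. Qed.

Lemma neg_intro_Bot G c f :
  derivable G f -> derivable G (Bot c) -> derivable G (neg c f).
Proof.
have [->|hc] := eqVneq c set0; first by rewrite neg0.
by move=> Hf Hc; apply: d_mp Hc (d_mp Hf (d_ax _ (A4 f hc))).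
Qed.

Lemma neg_negE G c d f :
  derivable G (neg c (neg d f)) <-> derivable G (neg (cocat c d) f).
Proof.
have [->|hc] := eqVneq c set0; first by rewrite neg0 cocat0x.
have [->|hd] := eqVneq d set0; first by rewrite neg0 cocatx0.
exact/iff_derivable/d_ax/A5.
Qed.

Lemma neg_BotE G c d : d != set0 ->
  derivable G (neg c (Bot d)) <-> derivable G (Bot (cocat c d)).
Proof.
have [->|hc] := eqVneq c set0; first by rewrite neg0 cocat0x.
by move=> hd; apply/iff_derivable/d_ax/A6.
Qed.

End WeakNegations.

Section Constants.

Variables (n : nat) (hn : 0 < n).
Implicit Types (G : formula n -> Prop) (f g h : formula n) (a b c d : chain n).

Lemma setT_neq0 : (setT : chain n) != set0.
Proof. by apply/set0Pn; exists (Ordinal hn); rewrite inE. Qed.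

Lemma snot_BotT G : derivable G (snot (Bot setT)).
Proof.
apply: (derivable_cases (f := Bot setT)); last exact: derivable_extended.
by apply: neg_intro_Bot; apply: derivable_extended.
Qed.

Lemma Bot0 G : derivable G (Bot set0).
Proof. by rewrite -(cocatxx setT); apply/(neg_BotE _ _ setT_neq0); exact: snot_BotT. Qed.

Lemma snot_BotE G c : derivable G (snot (Bot c)) <-> derivable G (Bot (~: c)).
Proof.
have [->|hc] := eqVneq c set0; last by rewrite -cocatTx; apply: neg_BotE.
by rewrite setC0; split=> H; [exact: ex_falso (Bot0 G) H | exact: ex_falso H (snot_BotT G)].
Qed.

Lemma neg_Bot_self G c : derivable G (neg c (Bot c)).
Proof.
have [->|hc] := eqVneq c set0; first by rewrite neg0; exact: Bot0.
by apply/neg_BotE; rewrite // cocatxx; exact: Bot0.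
Qed.

Lemma Bot_subset G c d : d \subset c -> derivable G (Bot c) -> derivable G (Bot d).
Proof.
have [->|hd] := eqVneq d set0; first by move=> _ _; exact: Bot0.
have [->|hc] := eqVneq c set0.
  by rewrite subset0 => /eqP d0; move: hd; rewrite d0 eqxx.
by move=> dc Hc; apply: d_mp Hc (d_ax _ (A7 hc hd dc)).
Qed.

Lemma Bot_setU G c d :
  derivable G (Bot c) -> derivable G (Bot d) -> derivable G (Bot (c :|: d)).
Proof.
move=> Hc Hd; have [->|hd] := eqVneq d set0; first by rewrite setU0.
have [/eqP|hcd] := eqVneq (c :\: d) set0.
  by rewrite setD_eq0 => /setUidPr ->.
rewrite -cocat_setD; apply/neg_BotE => //; apply: neg_intro_Bot Hd.
by apply: Bot_subset Hc; apply: subsetDl.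
Qed.

Lemma neg_Bot_elim G c f :
  derivable G (neg c f) -> derivable G (Bot c) -> derivable G f.
Proof.
by move=> Hf Hc; rewrite -(neg0 f) -(cocatxx c); apply/neg_negE/neg_intro_Bot.
Qed.

Lemma neg_BotC_elim G c f :
  derivable G (neg c f) -> derivable G (Bot (~: c)) -> derivable G (snot f).
Proof.
by move=> Hf Hc; rewrite /snot -(cocatCx c); apply/neg_negE/neg_intro_Bot.
Qed.

Lemma neg_Bot_of G c f : derivable G (neg c f) -> derivable G f -> derivable G (Bot c).
Proof.
move=> Hcf Hf; rewrite -(setCK c); apply/snot_BotE.
apply: (by_contradiction (g := f)); first exact: derivable_extend.
apply: neg_BotC_elim (derivable_extend _ Hcf) _.
exact/snotK_elim/derivable_extended.
Qed.

Lemma neg_BotC_of G c f :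
  derivable G (neg c f) -> derivable G (snot f) -> derivable G (Bot (~: c)).
Proof.
move=> Hcf Hnf; apply/snot_BotE.
apply: (by_contradiction (g := f)); last exact: derivable_extend.
apply: neg_Bot_elim (derivable_extend _ Hcf) _.
exact/snotK_elim/derivable_extended.
Qed.

Lemma neg_intro G c f :
  derivable (extend G (Bot c)) f -> derivable (extend G (Bot (~: c))) (snot f) ->
  derivable G (neg c f).
Proof.
move=> Hf /deduction Hnf; apply: (derivable_cases (f := Bot c)).
  exact: neg_intro_Bot Hf (derivable_extended _ _).
have HCc : derivable (extend G (snot (Bot c))) (Bot (~: c)).
  exact/snot_BotE/derivable_extended.
have := neg_intro_Bot (d_mp HCc (derivable_extend _ Hnf)) HCc.
by move/neg_negE; rewrite cocatCT.
Qed.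

Lemma neg_Imp G a b g h :
  derivable G (neg a g) -> derivable G (neg b h) ->
  derivable G (neg (~: a :&: b) (Imp g h)).
Proof.
move=> Hg Hh; apply: neg_intro.
- apply/deduction/(by_contradiction (g := Bot (~: a :&: b))).
    exact/derivable_extend/derivable_extend/derivable_extended.
  set G' := extend _ (snot h).
  have lift f : derivable G f -> derivable G' f by move=> Hf; do 3 apply: derivable_extend.
  have Ha : derivable G' (Bot a).
    exact: neg_Bot_of (lift _ Hg) (derivable_extend _ (derivable_extended _ _)).
  have Hb : derivable G' (Bot (~: b)) by exact: neg_BotC_of (lift _ Hh) (derivable_extended _ _).
  by apply/snot_BotE; rewrite setCI setCK; apply: Bot_setU.
- rewrite setCI setCK; set G' := extend _ _.
  have Ha : derivable G' (Bot a) by apply: Bot_subset (subsetUl _ _) (derivable_extended _ _).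
  have Hb : derivable G' (Bot (~: b)) by apply: Bot_subset (subsetUr _ _) (derivable_extended _ _).
  apply: snot_imp_intro.
  + exact: neg_Bot_elim (derivable_extend _ Hg) Ha.
  + exact: neg_BotC_elim (derivable_extend _ Hh) Hb.
Qed.

End Constants.

Section Contingency.

Variables (n : nat) (v : valuation n).

Lemma contingency_Bot c : contingency v (Bot c) = c.
Proof. by apply/setP=> i; rewrite inE /= negbK. Qed.

Lemma contingency_Neg c (hc : c != set0) f :
  contingency v (Neg hc f) = cocat (contingency v f) c.
Proof. by apply/setP=> i; rewrite /cocat !inE /=; case: (i \in c); case: eval. Qed.

Lemma contingency_Imp f g :
  contingency v (Imp f g) = ~: contingency v f :&: contingency v g.
Proof. by apply/setP=> i; rewrite !inE /=; case: (eval v f i); case: eval. Qed.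

Lemma derivable_vform (hn : 0 < n) G phi :
  {in letters phi, forall p, G (vform v (Var p))} -> derivable G (vform v phi).
Proof.
rewrite /vform; elim: phi => [p|c|c hc f IHf|f IHf g IHg] /= Hletters.
- by apply: d_hyp; apply: Hletters; rewrite inE.
- by rewrite contingency_Bot; apply: neg_Bot_self.
- rewrite contingency_Neg -(neg_nz hc); apply/neg_negE; rewrite cocatK.
  exact: IHf.
- rewrite contingency_Imp; apply: neg_Imp => //.
  + by apply: IHf => p Hp; apply: Hletters; rewrite mem_cat Hp.
  + by apply: IHg => p Hp; apply: Hletters; rewrite mem_cat Hp orbT.
Qed.

End Contingency.

Theorem mainTheorem14 (n : nat) (hn : 0 < n) (ps : seq nat) (phi : formula n)
    (hphi : {subset letters phi <= ps}) (v : valuation n) :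
  derivable (fun psi => exists2 p, p \in ps & psi = vform v (Var p))
            (vform v phi).
Proof. by apply: derivable_vform => // p /hphi Hp; exists p. Qed.
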